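(* Let $(\mathfrak g,[\cdot,\cdot]_{\mathfrak g},E)$ be an ENL algebra, $(W;T,\rho)$ an ENE-representation of it, and $K:W\to\mathfrak g$ an ENE-relative Rota–Baxter operator with respect to $(W;T,\rho)$. Let $\bar K\in(\mathfrak g\oplus W^* )\otimes(\mathfrak g\oplus W^* )$ be the element corresponding to $K$ under $\mathrm{Hom}(W,\mathfrak g)\cong\mathfrak g\otimes W^*$, and $r_K:=\bar K-\sigma(\bar K)$ where $\sigma$ is the flip. Then $r_K$ is a skew-symmetric solution of the classical Yang–Baxter equation in the semidirect product ENL algebra $(\mathfrak g\ltimes_{\rho^*}W^*,E+T^* )$; that is, $[\![r_K,r_K]\!]=0$ in $\mathfrak g\ltimes_{\rho^*}W^*$ and $((E+T^* )\otimes\mathrm{Id}-\mathrm{Id}\otimes(E+T^* ))(r_K)=0$.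
   Context: All vector spaces are finite-dimensional over an algebraically closed field of characteristic zero. An ENL algebra is a Lie algebra with linear $E$ such that $E[x,y]=[x,Ey]$ for all $x,y$. An ENE-representation $(W;T,\rho)$ of $(\mathfrak g,E)$ is a representation $\rho:\mathfrak g\to\mathfrak{gl}(W)$ with linear $T:W\to W$ such that $T(\rho(x)u)=\rho(Ex)u=\rho(x)(Tu)$. An ENE-relative Rota–Baxter operator is a linear $K:W\to\mathfrak g$ with $[Ku,Kv]_{\mathfrak g}=K(\rho(Ku)v-\rho(Kv)u)$ for all $u,v\in W$ and $E\circ K=K\circ T$. The dual representation is $\langle\rho^*(x)\xi,u\rangle=-\langle\xi,\rho(x)u\rangle$, $T^*$ is the dual map of $T$. The semidirect product $\mathfrak g\ltimes_{\rho^*}W^*$ is $\mathfrak g\oplus W^*$ with bracket $[x+\xi,y+\eta]=[x,y]_{\mathfrak g}+\rho^*(x)\eta-\rho^*(y)\xi$, with operator $(E+T^* )(x+\xi)=Ex+T^*\xi$. Concretely $\bar K=\sum_iK(w_i)\otimes w_i^*$ for a basis $(w_i)$ of $W$ with dual basis $(w_i^* )$. For $r=\sum a_i\otimes b_i$, $[\![r,r]\!]=[r_{12},r_{13}]+[r_{13},r_{23}]+[r_{12},r_{23}]$ in the tensor cube of the universal enveloping algebra. *)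

(* Finite-dimensional spaces are modelled by row vectors
   'rV[F]_n over a field F (any n-dim space is isomorphic to F^n);
   tensors in L (x) L, L = F^N, are N x N matrices (a (x) b |-> a^T *m b),
   tensors in L (x) L (x) L are coefficient functions 'I_N -> 'I_N -> 'I_N -> F. *)
From mathcomp Require Import all_boot all_order all_algebra.
Set Implicit Arguments. Unset Strict Implicit. Unset Printing Implicit Defensive.
Import GRing.Theory.
Local Open Scope ring_scope.

Definition bv {F : fieldType} {n : nat} (i : 'I_n) : 'rV[F]_n := delta_mx 0 i.

Definition is_linear {F : fieldType} {n m : nat} (f : 'rV[F]_n -> 'rV[F]_m) : Prop :=
  forall (a : F) u v, f (a *: u + v) = a *: f u + f v.

Definition is_Lie {F : fieldType} {n : nat} (br : 'rV[F]_n -> 'rV[F]_n -> 'rV[F]_n) : Prop :=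
  [/\ forall x, is_linear (br x), forall y, is_linear (br^~ y),
      forall x, br x x = 0 &
      forall x y z, br x (br y z) + br y (br z x) + br z (br x y) = 0].

Definition is_ENL {F : fieldType} {n : nat} (br : 'rV[F]_n -> 'rV[F]_n -> 'rV[F]_n)
  (E : 'rV[F]_n -> 'rV[F]_n) : Prop :=
  [/\ is_Lie br, is_linear E & forall x y, E (br x y) = br x (E y)].

Definition is_rep {F : fieldType} {n m : nat} (br : 'rV[F]_n -> 'rV[F]_n -> 'rV[F]_n)
  (rho : 'rV[F]_n -> 'rV[F]_m -> 'rV[F]_m) : Prop :=
  [/\ forall x, is_linear (rho x), forall u, is_linear (fun x => rho x u) &
      forall x y u, rho (br x y) u = rho x (rho y u) - rho y (rho x u)].

Definition is_ENE_rep {F : fieldType} {n m : nat} (br : 'rV[F]_n -> 'rV[F]_n -> 'rV[F]_n)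
  (E : 'rV[F]_n -> 'rV[F]_n) (T : 'rV[F]_m -> 'rV[F]_m)
  (rho : 'rV[F]_n -> 'rV[F]_m -> 'rV[F]_m) : Prop :=
  [/\ is_rep br rho, is_linear T &
      forall x u, T (rho x u) = rho (E x) u /\ rho (E x) u = rho x (T u)].

Definition is_ENE_RB {F : fieldType} {n m : nat} (br : 'rV[F]_n -> 'rV[F]_n -> 'rV[F]_n)
  (E : 'rV[F]_n -> 'rV[F]_n) (T : 'rV[F]_m -> 'rV[F]_m)
  (rho : 'rV[F]_n -> 'rV[F]_m -> 'rV[F]_m) (K : 'rV[F]_m -> 'rV[F]_n) : Prop :=
  [/\ is_linear K,
      forall u v, br (K u) (K v) = K (rho (K u) v - rho (K v) u) &
      forall u, E (K u) = K (T u)].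

(* W^dual is identified with F^m via the dual basis; pairing <xi, u> *)
Definition dpair {F : fieldType} {m : nat} (xi u : 'rV[F]_m) : F :=
  \sum_(i < m) xi 0 i * u 0 i.

Definition dual_rep {F : fieldType} {n m : nat} (rho : 'rV[F]_n -> 'rV[F]_m -> 'rV[F]_m)
  (x : 'rV[F]_n) (xi : 'rV[F]_m) : 'rV[F]_m :=
  \row_i (- dpair xi (rho x (bv i))).

Definition dual_map {F : fieldType} {m : nat} (T : 'rV[F]_m -> 'rV[F]_m)
  (xi : 'rV[F]_m) : 'rV[F]_m :=
  \row_i dpair xi (T (bv i)).

Definition sd_bracket {F : fieldType} {n m : nat} (br : 'rV[F]_n -> 'rV[F]_n -> 'rV[F]_n)
  (rho : 'rV[F]_n -> 'rV[F]_m -> 'rV[F]_m) (X Y : 'rV[F]_(n + m)) : 'rV[F]_(n + m) :=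
  row_mx (br (lsubmx X) (lsubmx Y))
         (dual_rep rho (lsubmx X) (rsubmx Y) - dual_rep rho (lsubmx Y) (rsubmx X)).

Definition sd_op {F : fieldType} {n m : nat} (E : 'rV[F]_n -> 'rV[F]_n)
  (T : 'rV[F]_m -> 'rV[F]_m) (X : 'rV[F]_(n + m)) : 'rV[F]_(n + m) :=
  row_mx (E (lsubmx X)) (dual_map T (rsubmx X)).

Definition tens {F : fieldType} {N : nat} (a b : 'rV[F]_N) : 'M[F]_N := a^T *m b.

Definition Kbar {F : fieldType} {n m : nat} (K : 'rV[F]_m -> 'rV[F]_n) : 'M[F]_(n + m) :=
  \sum_(i < m) tens (row_mx (K (bv i)) 0) (row_mx 0 (bv i)).

Definition flip {F : fieldType} {N : nat} (r : 'M[F]_N) : 'M[F]_N := r^T.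

Definition rK {F : fieldType} {n m : nat} (K : 'rV[F]_m -> 'rV[F]_n) : 'M[F]_(n + m) :=
  Kbar K - flip (Kbar K).

Definition tmap2 {F : fieldType} {N : nat} (f g : 'rV[F]_N -> 'rV[F]_N) (r : 'M[F]_N)
  : 'M[F]_N :=
  \sum_(p < N) \sum_(q < N) r p q *: tens (f (bv p)) (g (bv q)).

(* [[r, r]] = [r12,r13] + [r13,r23] + [r12,r23], as coefficients in L (x) L (x) L
   w.r.t. the standard basis: for r = sum r_pq e_p (x) e_q,
   [r12,r13] = sum r_iq r_ks [e_i,e_k] (x) e_q (x) e_s, etc. *)
Definition CYB {F : fieldType} {N : nat} (brL : 'rV[F]_N -> 'rV[F]_N -> 'rV[F]_N)
  (r : 'M[F]_N) (p q s : 'I_N) : F :=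
    \sum_(i < N) \sum_(k < N) r i q * r k s * brL (bv i) (bv k) 0 p
  + \sum_(j < N) \sum_(l < N) r p j * r q l * brL (bv j) (bv l) 0 s
  + \sum_(j < N) \sum_(k < N) r p j * r k s * brL (bv j) (bv k) 0 q.

(* With respect to the splitting g (+) W^*, r_K is the block matrix
   [[0, K], [-K^T, 0]], so its row indexed by a basis vector of g lies in W^*
   and its row indexed by w_j is -K(w_j) in g.  For a skew-symmetric r, the
   component (p, q, s) of [[r, r]] is a signed sum of three brackets of rows
   of r.  Since g is a subalgebra and W^* an abelian ideal, only components
   with exactly one leg in g can be nonzero, and each of them is a coordinate
   of [K u, K v] - K(rho(K u) v - rho(K v) u), which is zero.  Likewise the
   second identity reduces, coordinatewise, to E K = K T. *)

From HB Require Import structures.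
From mathcomp Require Import all_boot all_order all_algebra.
From mathcomp Require Import ring.
Set Implicit Arguments. Unset Strict Implicit. Unset Printing Implicit Defensive.
Import GRing.Theory.
Local Open Scope ring_scope.

Section LinearMaps.
Variables (F : fieldType) (n m : nat) (f : 'rV[F]_n -> 'rV[F]_m).
Hypothesis lf : is_linear f.

Let fL : {linear 'rV[F]_n -> 'rV[F]_m} := HB.pack f (GRing.isLinear.Build F _ _ _ f lf).

Lemma is_linear0 : f 0 = 0. Proof. exact: (linear0 fL). Qed.

Lemma is_linearN u : f (- u) = - f u. Proof. exact: (linearN fL u). Qed.

Lemma is_linearB u v : f (u - v) = f u - f v. Proof. exact: (linearB fL u v). Qed.

Lemma is_linear_coordE u k : f u 0 k = \sum_(j < n) u 0 j * f (bv j) 0 k.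
Proof.
have -> : f u = \sum_(j < n) u 0 j *: f (bv j).
  rewrite {1}(row_sum_delta u).
  by elim/big_rec2: _ => [|j v w _ <-]; [exact: is_linear0 | exact: lf].
by rewrite summxE; apply: eq_bigr => j _; rewrite mxE.
Qed.

End LinearMaps.

Section Bilinear.
Variables (F : fieldType) (n m p : nat) (B : 'rV[F]_n -> 'rV[F]_m -> 'rV[F]_p).
Hypotheses (linBr : forall x, is_linear (B x)) (linBl : forall y, is_linear (B^~ y)).

Lemma bilin0l y : B 0 y = 0. Proof. exact: is_linear0 (linBl y). Qed.
Lemma bilin0r x : B x 0 = 0. Proof. exact: is_linear0 (linBr x). Qed.
Lemma bilinNl x y : B (- x) y = - B x y. Proof. exact: is_linearN (linBl y) x. Qed.
Lemma bilinNr x y : B x (- y) = - B x y. Proof. exact: is_linearN (linBr x) y. Qed.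

Lemma bilin_coordE (c : 'I_n -> F) (d : 'I_m -> F) k :
  \sum_(i < n) \sum_(j < m) c i * d j * B (bv i) (bv j) 0 k
  = B (\row_i c i) (\row_j d j) 0 k.
Proof.
rewrite (is_linear_coordE (linBl _)); apply: eq_bigr => i _.
rewrite (is_linear_coordE (linBr _)) mulr_sumr; apply: eq_bigr => j _.
by rewrite !mxE mulrA.
Qed.

End Bilinear.

Section Tensors.
Variables (F : fieldType) (N : nat).
Implicit Types (r : 'M[F]_N) (f g : 'rV[F]_N -> 'rV[F]_N).

Lemma tensE (a b : 'rV[F]_N) x y : tens a b x y = a 0 x * b 0 y.
Proof. by rewrite !mxE big_ord1 !mxE. Qed.

Lemma sum_mul_bvl (c : 'I_N -> F) y : \sum_(q < N) c q * (bv q : 'rV[F]_N) 0 y = c y.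
Proof.
rewrite (bigD1 y) //= big1 ?addr0; first by rewrite mxE !eqxx mulr1.
by move=> q /negbTE nqy; rewrite mxE eq_sym nqy andbF mulr0.
Qed.

Lemma sum_mul_bvr (c : 'I_N -> F) x : \sum_(p < N) (bv p : 'rV[F]_N) 0 x * c p = c x.
Proof. by under eq_bigr do rewrite mulrC; exact: sum_mul_bvl. Qed.

Lemma tmap2_idr f r x y : is_linear f -> tmap2 f id r x y = f (row y r^T) 0 x.
Proof.
move=> lf; rewrite (is_linear_coordE lf) summxE; apply: eq_bigr => p _.
rewrite summxE; under eq_bigr do rewrite mxE tensE mulrA.
by rewrite sum_mul_bvl !mxE.
Qed.

Lemma tmap2_idl g r x y : is_linear g -> tmap2 id g r x y = g (row x r) 0 y.
Proof.
move=> lg; rewrite (is_linear_coordE lg) summxE.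
under eq_bigr do rewrite summxE.
rewrite exchange_big; apply: eq_bigr => q _.
under eq_bigr do rewrite mxE tensE mulrCA.
by rewrite sum_mul_bvr !mxE.
Qed.

Lemma flip_skew (A : 'M[F]_N) : flip (A - flip A) = - (A - flip A).
Proof. by rewrite /flip linearB /= trmxK opprB. Qed.

Lemma CYB_skewE (brL : 'rV[F]_N -> 'rV[F]_N -> 'rV[F]_N) r p q s :
  (forall x, is_linear (brL x)) -> (forall y, is_linear (brL^~ y)) -> flip r = - r ->
  CYB brL r p q s = brL (row q r) (row s r) 0 p + brL (row p r) (row q r) 0 s
                    - brL (row p r) (row s r) 0 q.
Proof.
move=> linr linl skew_r.
have colE j : \row_i r i j = - row j r.
  by apply/rowP => i; move/matrixP/(_ j i): skew_r; rewrite /flip !mxE.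
rewrite /CYB !bilin_coordE // !colE (bilinNl linl) !(bilinNr linr).
by rewrite !mxE opprK.
Qed.

End Tensors.

Section SemidirectProduct.
Variables (F : fieldType) (n m : nat) (br : 'rV[F]_n -> 'rV[F]_n -> 'rV[F]_n)
  (rho : 'rV[F]_n -> 'rV[F]_m -> 'rV[F]_m) (E : 'rV[F]_n -> 'rV[F]_n)
  (T : 'rV[F]_m -> 'rV[F]_m).

Lemma dpair_linearl (a : F) (xi eta u : 'rV[F]_m) :
  dpair (a *: xi + eta) u = a * dpair xi u + dpair eta u.
Proof.
by rewrite /dpair mulr_sumr -big_split; apply: eq_bigr => i _; rewrite !mxE mulrDl mulrA.
Qed.

Lemma dpair_linearr (a : F) (xi u v : 'rV[F]_m) :
  dpair xi (a *: u + v) = a * dpair xi u + dpair xi v.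
Proof.
by rewrite /dpair mulr_sumr -big_split; apply: eq_bigr => i _; rewrite !mxE mulrDr mulrCA.
Qed.

Lemma dual_rep_linear x : is_linear (dual_rep rho x).
Proof. by move=> a xi eta; apply/rowP => i; rewrite !mxE dpair_linearl; ring. Qed.

Lemma dual_map_linear : is_linear (dual_map T).
Proof. by move=> a xi eta; apply/rowP => i; rewrite !mxE dpair_linearl. Qed.

Hypotheses (linbr : forall x, is_linear (br x)) (linbl : forall y, is_linear (br^~ y)).
Hypothesis linrhol : forall u, is_linear (fun x => rho x u).

Lemma dual_rep_linearl xi : is_linear (dual_rep rho ^~ xi).
Proof.
by move=> a x y; apply/rowP => i; rewrite !mxE (linrhol (bv i)) dpair_linearr; ring.
Qed.

Lemma sd_bracket_row_mx x xi y eta :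
  sd_bracket br rho (row_mx x xi) (row_mx y eta)
  = row_mx (br x y) (dual_rep rho x eta - dual_rep rho y xi).
Proof. by rewrite /sd_bracket !row_mxKl !row_mxKr. Qed.

Lemma sd_bracket_linear X : is_linear (sd_bracket br rho X).
Proof.
move=> a Y Z; rewrite /sd_bracket !linearD !linearZ /= scale_row_mx add_row_mx.
rewrite linbr dual_rep_linear [dual_rep _ (_ + _) _]dual_rep_linearl.
by rewrite scalerBr opprD addrACA.
Qed.

Lemma sd_bracket_linearl Y : is_linear (sd_bracket br rho ^~ Y).
Proof.
move=> a X Z; rewrite /sd_bracket !linearD !linearZ /= scale_row_mx add_row_mx.
rewrite [br (_ + _) _]linbl dual_rep_linear [dual_rep _ (_ + _) _]dual_rep_linearl.
by rewrite scalerBr opprD addrACA.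
Qed.

Lemma sd_op_row_mx x xi : sd_op E T (row_mx x xi) = row_mx (E x) (dual_map T xi).
Proof. by rewrite /sd_op row_mxKl row_mxKr. Qed.

Lemma sd_op_linear : is_linear E -> is_linear (sd_op E T).
Proof.
move=> linE a X Y; rewrite /sd_op !linearD !linearZ /= scale_row_mx add_row_mx.
by rewrite linE dual_map_linear.
Qed.

End SemidirectProduct.

Section RelativeRotaBaxter.
Variables (F : fieldType) (n m : nat) (K : 'rV[F]_m -> 'rV[F]_n).

Definition Kmx : 'M[F]_(n, m) := \matrix_(a, j) K (bv j) 0 a.

Lemma Kbar_block : Kbar K = block_mx 0 Kmx 0 0.
Proof.
apply/matrixP => i j; rewrite summxE; under eq_bigr do rewrite tensE.
rewrite -(splitK i) -(splitK j); case: split => a; case: split => b /=;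
  rewrite ?block_mxEul ?block_mxEur ?block_mxEdl ?block_mxEdr mxE;
  under eq_bigr do rewrite ?row_mxEl ?row_mxEr.
- by rewrite big1 // => k _; rewrite mxE mulr0.
- by rewrite sum_mul_bvl.
- by rewrite big1 // => k _; rewrite mxE mul0r.
- by rewrite big1 // => k _; rewrite mxE mul0r.
Qed.

Lemma rK_block : rK K = block_mx 0 Kmx (- Kmx^T) 0.
Proof.
rewrite /rK /flip Kbar_block tr_block_mx !trmx0 opp_block_mx add_block_mx.
by rewrite !oppr0 !addr0 add0r.
Qed.

Lemma rK_skew : flip (rK K) = - rK K.
Proof. exact: flip_skew. Qed.

Lemma row_rK_lshift a : row (lshift m a) (rK K) = row_mx 0 (row a Kmx).
Proof. by rewrite rK_block /block_mx rowKu row_row_mx row0. Qed.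

Lemma row_rK_rshift j : row (rshift n j) (rK K) = row_mx (- K (bv j)) 0.
Proof.
rewrite rK_block /block_mx rowKd row_row_mx row0; congr row_mx.
by apply/rowP => a; rewrite !mxE.
Qed.

Lemma dpair_row_Kmx a u : is_linear K -> dpair (row a Kmx) u = K u 0 a.
Proof.
move=> linK; rewrite (is_linear_coordE linK) /dpair.
by apply: eq_bigr => j _; rewrite !mxE mulrC.
Qed.

End RelativeRotaBaxter.

Section ClassicalYangBaxter.
Variables (F : fieldType) (n m : nat) (br : 'rV[F]_n -> 'rV[F]_n -> 'rV[F]_n)
  (E : 'rV[F]_n -> 'rV[F]_n) (T : 'rV[F]_m -> 'rV[F]_m)
  (rho : 'rV[F]_n -> 'rV[F]_m -> 'rV[F]_m) (K : 'rV[F]_m -> 'rV[F]_n).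
Hypotheses (linbr : forall x, is_linear (br x)) (linbl : forall y, is_linear (br^~ y)).
Hypothesis linrhol : forall u, is_linear (fun x => rho x u).
Hypothesis linK : is_linear K.
Hypothesis RB : forall u v, br (K u) (K v) = K (rho (K u) v - rho (K v) u).

Lemma RB_coord i j a :
  br (K (bv i)) (K (bv j)) 0 a
  = K (rho (K (bv i)) (bv j)) 0 a - K (rho (K (bv j)) (bv i)) 0 a.
Proof. by rewrite RB (is_linearB linK) !mxE. Qed.

Lemma CYB_rK p q s : CYB (sd_bracket br rho) (rK K) p q s = 0.
Proof.
rewrite (CYB_skewE p q s (sd_bracket_linear linbr linrhol)
                         (sd_bracket_linearl linbl linrhol) (rK_skew K)).
have dual_rep0l := bilin0l (dual_rep_linearl linrhol).
have dual_rep0r := bilin0r (@dual_rep_linear F n m rho).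
have dual_repNl := bilinNl (dual_rep_linearl linrhol).
rewrite -(splitK p) -(splitK q) -(splitK s).
case: split => a; case: split => b; case: split => c /=;
  rewrite ?row_rK_lshift ?row_rK_rshift !sd_bracket_row_mx ?row_mxEl ?row_mxEr
    ?(bilin0l linbl) ?(bilin0r linbr) ?(bilinNl linbl) ?(bilinNr linbr)
    ?dual_rep0l ?dual_rep0r ?dual_repNl !mxE ?(dpair_row_Kmx _ _ linK) ?RB_coord; ring.
Qed.

Hypotheses (linE : is_linear E) (EK : forall u, E (K u) = K (T u)).

Lemma sd_op_rK_row_sym x y :
  sd_op E T (row y (rK K)) 0 x + sd_op E T (row x (rK K)) 0 y = 0.
Proof.
rewrite -(splitK x) -(splitK y).
case: split => a; case: split => b /=;
  rewrite ?row_rK_lshift ?row_rK_rshift !sd_op_row_mx ?row_mxEl ?row_mxEr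
    ?(is_linear0 linE) ?(is_linear0 (@dual_map_linear F m T)) ?(is_linearN linE) ?EK
    !mxE ?(dpair_row_Kmx _ _ linK); ring.
Qed.

Lemma tmap2_rK :
  tmap2 (sd_op E T) id (rK K) - tmap2 id (sd_op E T) (rK K) = 0.
Proof.
have linS := sd_op_linear T linE.
apply/matrixP => x y; rewrite !mxE tmap2_idr // tmap2_idl //.
rewrite -[(rK K)^T]/(flip (rK K)) rK_skew linearN /= (is_linearN linS) mxE.
by rewrite -opprD sd_op_rK_row_sym oppr0.
Qed.

End ClassicalYangBaxter.

Theorem theorem6p9 (F : closedFieldType) (n m : nat)
  (br : 'rV[F]_n -> 'rV[F]_n -> 'rV[F]_n) (E : 'rV[F]_n -> 'rV[F]_n)
  (T : 'rV[F]_m -> 'rV[F]_m) (rho : 'rV[F]_n -> 'rV[F]_m -> 'rV[F]_m)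
  (K : 'rV[F]_m -> 'rV[F]_n) :
  [pchar F] =i pred0 ->
  is_ENL br E -> is_ENE_rep br E T rho -> is_ENE_RB br E T rho K ->
  [/\ flip (rK K) = - rK K,
      (forall p q s : 'I_(n + m), CYB (sd_bracket br rho) (rK K) p q s = 0) &
      tmap2 (sd_op E T) id (rK K) - tmap2 id (sd_op E T) (rK K) = 0].
Proof.
move=> _ [[linbr linbl _ _] linE _] [[_ linrhol _] _ _] [linK RB EK].
split.
- exact: rK_skew.
- by move=> p q s; apply: CYB_rK.
- exact: tmap2_rK.
Qed.
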